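(* Let $R$ be a commutative ring, $F$ a free $R$-module with basis $e_1,\dots,e_n$, $\varphi:F\to R$ an $R$-linear map, $M$ an $R$-module and $t\ge 0$. Define $\gamma_t:K_{s+t}(\varphi,M)\to K_s(\varphi,K_t(\varphi,M))=\bigwedge^sF\otimes_R K_t(\varphi,M)$ for every $s\ge 0$ by $\gamma_t(f)=\sum_{\#I=s}e_I\otimes b_I$, where $b_I$ is determined by the decomposition $f=a_I+e_I.b_I$. Then $\gamma_t$ is a map of complexes $K(\varphi,M)\to K(\varphi,K_t(\varphi,M))[-t]$, i.e. $\gamma_t$ commutes with the Koszul differentials (the differential on $K(\varphi,K_t(\varphi,M))$ being the Koszul differential of $\varphi$ with coefficients in the module $K_t(\varphi,M)$).
   Context: The Koszul complex is $K(\varphi,N)=\bigwedge^\bullet F\otimes_R N$ for an $R$-module $N$, with $K_t(\varphi,N)=\bigwedge^tF\otimes_R N$ and differential $e_{i_1}\wedge\cdots\wedge e_{i_s}\otimes m\mapsto \sum_{j=1}^s(-1)^{j+1}e_{i_1}\wedge\cdots\widehat{e_{i_j}}\cdots\wedge e_{i_s}\otimes \varphi(e_{i_j})m$. The exterior algebra acts on $K(\varphi,M)$ by left multiplication, written $a.f$. For $I=\{i_1<\dots<i_s\}$, $e_I=e_{i_1}\wedge\cdots\wedge e_{i_s}$. Every $f\in K_r(\varphi,M)$ is uniquely $\sum_{\#J=r}e_J\otimes m_J$; $e_J$ appears in $f$ if $m_J\ne0$. For $f\in K_{s+t}(\varphi,M)$ and $\#I=s$ there is a unique decomposition $f=a_I+e_I.b_I$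 with $a_I\in K_{s+t}(\varphi,M)$, $b_I\in K_t(\varphi,M)$, no $e_J$ with $J\supseteq I$ appearing in $a_I$, and no $e_S$ with $S\cap I\ne\emptyset$ appearing in $b_I$. *)

(* Concrete model of the Koszul complex K(phi,N) = /\F (x) N
   for F free with basis e_0,...,e_{n-1} (indices 'I_n) and phi : F -> R
   determined by x i := phi(e_i).  An element sum_J e_J (x) m_J is represented
   by its coefficient function J |-> m_J, i.e. by f : {ffun {set 'I_n} -> N};
   it lies in K_r(phi,N) iff m_J = 0 whenever #|J| <> r. *)
From HB Require Import structures.
From mathcomp Require Import all_boot all_order all_algebra.
Set Implicit Arguments. Unset Strict Implicit. Unset Printing Implicit Defensive.
Import Order.TTheory GRing.Theory Num.Theory.
Local Open Scope ring_scope.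

(* number of pairs (i,s) in I x S with i > s:
   e_I /\ e_S = (-1)^(inv_count I S) e_(I u S) when I, S are disjoint. *)
Definition inv_count (n : nat) (I S : {set 'I_n}) : nat :=
  #|[set p : 'I_n * 'I_n | [&& p.1 \in I, p.2 \in S & (p.2 < p.1)%N]]|.


Definition homogeneous (R : comPzRingType) (N : lmodType R) (n r : nat)
  (f : {ffun {set 'I_n} -> N}) : Prop :=
  forall J : {set 'I_n}, f J != 0 -> #|J| = r.

(* Koszul differential:
   d(e_J (x) m) = sum_k (-1)^(k+1) e_(J \ j_k) (x) phi(e_(j_k)) m,
   in coefficients: (d f)_L = sum_(j notin L) (-1)^#{i in L | i < j} x_j f_(j u L). *)
Definition koszul_d (R : comPzRingType) (N : lmodType R) (n : nat)
  (x : 'I_n -> R) (f : {ffun {set 'I_n} -> N}) : {ffun {set 'I_n} -> N} :=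
  [ffun L : {set 'I_n} =>
     \sum_(j : 'I_n | j \notin L)
        ((-1) ^+ inv_count [set j] L * x j) *: f (j |: L)].

(* Left multiplication by e_I:  (e_I . b)_J = sum over S disjoint from I with
   I u S = J of (-1)^(inv_count I S) b_S. *)
Definition ext_mul (R : comPzRingType) (N : lmodType R) (n : nat)
  (I : {set 'I_n}) (b : {ffun {set 'I_n} -> N}) : {ffun {set 'I_n} -> N} :=
  [ffun J : {set 'I_n} =>
     \sum_(S : {set 'I_n} | [disjoint I & S] && (I :|: S == J))
        (-1) ^+ inv_count I S *: b S].

(* b_I in the unique decomposition f = a_I + e_I . b_I (f in K_(s+t), #I = s):
   b_I has coefficient (-1)^(inv_count I S) f_(I u S) at each S of size t
   disjoint from I, and 0 elsewhere. *)
Definition bI (R : comPzRingType) (M : lmodType R) (n t : nat)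
  (I : {set 'I_n}) (f : {ffun {set 'I_n} -> M}) : {ffun {set 'I_n} -> M} :=
  [ffun S : {set 'I_n} =>
     if (#|S| == t) && [disjoint I & S]
     then (-1) ^+ inv_count I S *: f (I :|: S) else 0].

Definition gamma (R : comPzRingType) (M : lmodType R) (n s t : nat)
  (f : {ffun {set 'I_n} -> M})
  : {ffun {set 'I_n} -> {ffun {set 'I_n} -> M}} :=
  [ffun I : {set 'I_n} => if #|I| == s then bI t I f else 0].

(* Coefficientwise, at a pair (L, S) both sides of d . gamma = gamma . d are
   sums over j outside L and S of +-x_j f(j u L u S); the two signs agree
   because inv_count is additive in each argument over disjoint unions.
   For s > 0 this needs no homogeneity.  For s = 0 both sides vanish:
   d(gamma_0 f) because gamma_0 f is concentrated in the component of the
   empty set, and gamma_0 (d f) because d f lives in degree t - 1, not t. *)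
From HB Require Import structures.
From mathcomp Require Import all_boot all_order all_algebra.
Import GRing.Theory.
Local Open Scope ring_scope.

Lemma inv_countE n (A B : {set 'I_n}) :
  inv_count A B = (\sum_(i in A) \sum_(j in B) (j < i))%N.
Proof.
rewrite /inv_count pair_big_dep /= -sum1_card big_mkcond [RHS]big_mkcond /=.
apply: eq_bigr => -[i j] _; rewrite !inE /=.
by case: (i \in A); case: (j \in B); case: ltnP.
Qed.

Lemma inv_count_setUl n (A B S : {set 'I_n}) : [disjoint A & B] ->
  inv_count (A :|: B) S = (inv_count A S + inv_count B S)%N.
Proof.
by move=> dAB; rewrite !inv_countE -bigU //; apply: eq_bigl => i; rewrite inE.
Qed.

Lemma inv_count_setUr n (A B S : {set 'I_n}) : [disjoint A & B] ->
  inv_count S (A :|: B) = (inv_count S A + inv_count S B)%N.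
Proof.
move=> dAB; rewrite !inv_countE -big_split; apply: eq_bigr => i _.
by rewrite -bigU //; apply: eq_bigl => j; rewrite inE.
Qed.

Lemma inv_count_setU1_sign n (j : 'I_n) (L S : {set 'I_n}) :
  j \notin L -> [disjoint L & S] ->
  (inv_count [set j] L + inv_count (j |: L) S
   = inv_count L S + inv_count [set j] (L :|: S))%N.
Proof.
move=> jL dLS; rewrite inv_count_setUl ?disjoints1 // inv_count_setUr //.
by rewrite addnA addnC.
Qed.

Lemma disjoint_setU1l (T : finType) (j : T) (L S : {set T}) :
  [disjoint j |: L & S] = (j \notin S) && [disjoint L & S].
Proof. by rewrite -disjointU1; apply: eq_disjoint => i; rewrite !inE. Qed.

Section KoszulGamma.

Variables (R : comPzRingType) (M : lmodType R) (n : nat) (x : 'I_n -> R).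
Implicit Types (I L S : {set 'I_n}) (f : {ffun {set 'I_n} -> M}).

Lemma gammaE s t f I S :
  gamma s t f I S = if [&& #|I| == s, #|S| == t & [disjoint I & S]]
                    then (-1) ^+ inv_count I S *: f (I :|: S) else 0.
Proof. by rewrite !ffunE; case: (#|I| == s); rewrite ?ffunE. Qed.

Lemma koszul_d_ffunE (N : lmodType R)
    (g : {ffun {set 'I_n} -> {ffun {set 'I_n} -> N}}) L S :
  koszul_d x g L S
  = \sum_(j | j \notin L) ((-1) ^+ inv_count [set j] L * x j) *: g (j |: L) S.
Proof. by rewrite ffunE sum_ffunE; apply: eq_bigr => j _; rewrite ffunE. Qed.

Lemma koszul_d_eq0 r f L :
  homogeneous r f -> #|L|.+1 != r -> koszul_d x f L = 0.
Proof.
move=> hf hL; rewrite ffunE big1 // => j jL.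
have [/hf fj|/negbNE/eqP ->] := boolP (f (j |: L) != 0).
  by rewrite -fj cardsU1 jL add1n eqxx in hL.
by rewrite scaler0.
Qed.

Lemma koszul_d_gamma0 t f : koszul_d x (gamma 0 t f) = 0.
Proof.
apply/ffunP => L; apply/ffunP => S.
rewrite koszul_d_ffunE !ffunE big1 // => j jL.
by rewrite gammaE cardsU1 jL scaler0.
Qed.

Lemma gamma0_koszul_d t f : homogeneous t f -> gamma 0 t (koszul_d x f) = 0.
Proof.
move=> hf; apply/ffunP => L; apply/ffunP => S; rewrite gammaE.
case: ifP => [|_]; last by rewrite !ffunE.
case/and3P => /eqP/cards0_eq -> /eqP St _.
by rewrite set0U (koszul_d_eq0 _ _ _ hf) ?scaler0 ?ffunE // St eqn_leq ltnn.
Qed.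

Lemma koszul_d_gammaS s t f :
  koszul_d x (gamma s.+1 t f) = gamma s t (koszul_d x f).
Proof.
apply/ffunP => L; apply/ffunP => S; rewrite koszul_d_ffunE gammaE ffunE.
under eq_bigr => j jL do rewrite gammaE cardsU1 jL add1n eqSS disjoint_setU1l.
have [/and3P[-> -> dLS] | ncond] :=
  boolP [&& #|L| == s, #|S| == t & [disjoint L & S]].
  under eq_bigr do rewrite dLS andbT.
  rewrite scaler_sumr big_mkcond [RHS]big_mkcond; apply: eq_bigr => j _.
  rewrite inE negb_or; case: (boolP (j \in L)) => //= jL.
  case: (boolP (j \in S)) => /= jS; first by rewrite scaler0.
  by rewrite setUA !scalerA mulrAC -exprD inv_count_setU1_sign // exprD mulrA.
rewrite big1 // => j _; case: ifP => [cond|]; last by rewrite scaler0.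
by case/and4P: cond ncond => -> -> _ ->.
Qed.

End KoszulGamma.

Theorem lemma2p3 (R : comPzRingType) (M : lmodType R) (n : nat)
  (x : 'I_n -> R) (t s : nat) (f : {ffun {set 'I_n} -> M}) :
  homogeneous (s + t) f ->
  koszul_d x (gamma s t f) = gamma s.-1 t (koszul_d x f).
Proof.
case: s => [|s] hf; last exact: koszul_d_gammaS.
by rewrite koszul_d_gamma0 gamma0_koszul_d.
Qed.
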